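(* Let $\Gamma=\{\gamma_t=\exp(tA):t\in\mathbb R\}\subset GL(3,\mathbb R)$ with nonzero $A=(a_{ij})\in\mathfrak{gl}(3,\mathbb R)$, acting on $\mathbb{RP}^2$ by projective transformations. Let $\infty_Y=(0:1:0)$, $\pi:\mathbb{RP}^2\setminus\{\infty_Y\}\to\mathbb{RP}^1$, $\pi(x:y:z)=(x:z)$, $S_0=\{\infty_Y\}$, $S=\{(\gamma,p):\gamma(p)=\infty_Y\}$, and $L_0=\{(x,y)\in\mathbb R^2:a_{32}x=a_{12}\}$ if $a_{32}\ne0$; $L_0=\mathbb{RP}^2\setminus\mathbb R^2$ (the line at infinity) if $a_{32}=0$ and $a_{12}\neq0$; $L_0=\mathbb{RP}^2$ if $a_{32}=a_{12}=0$. Let $L=\{(\gamma,p):\gamma(p)\in L_0\}$ and $K=L\cup S$. Then $\Pi:\Gamma\times\mathbb{RP}^2\to\mathbb{RP}^1$, $\Pi(\gamma,p)=\pi(\gamma(p))$, is defined on $(\Gamma\times\mathbb{RP}^2)\setminus S$ and is locally transversal on $(\Gamma\times\mathbb{RP}^2)\setminus K$.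
   Context: Homogeneous coordinates: $(x:y:z)$ with $z\ne0$ is the finite point $(x/z,y/z)\in\mathbb R^2$; points with $z=0$ form the line at infinity; matrices act on homogeneous coordinates as on vectors. Transversality (here $k=m=1$), in smooth local coordinates: for $\Pi(t,p)$ put $\Phi(t,v,w)=\frac{\Pi(t,v)-\Pi(t,w)}{|v-w|}$ for $v\ne w$; $\Pi$ is transversal on $\Lambda\times\Omega$ if there is $C>0$ such that for all $t$ and $v\ne w$: if $|\Phi(t,v,w)|\le C$ then $|\partial_t\Phi(t,v,w)|\ge C$. Locally transversal: the domain can be covered by open sets on each of which (in local coordinates of parameter space, domain and target) the restriction is transversal. *)

From HB Require Import structures.
From mathcomp Require Import all_boot all_order all_algebra.
From mathcomp Require Import all_classical all_reals all_analysis.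
Set Implicit Arguments. Unset Strict Implicit. Unset Printing Implicit Defensive.
Import Order.TTheory GRing.Theory Num.Theory.
Import numFieldNormedType.Exports.
Local Open Scope classical_set_scope.
Local Open Scope ring_scope.

Section Defs.
Variable R : realType.

Definition expmx (A : 'M[R]_3) (t : R) : 'M[R]_3 :=
  \matrix_(i, j) limn (series (fun k : nat => t ^+ k / (k`!)%:R * (A ^+ k) i j)).

(* gamma_t(p) on homogeneous coordinates (column vectors) *)
Definition gact (A : 'M[R]_3) (t : R) (p : 'cV[R]_3) : 'cV[R]_3 :=
  expmx A t *m p.

Definition eY : 'cV[R]_3 := \col_k (if k == 1 :> nat then 1 else 0).

Definition isInfY (q : 'cV[R]_3) : Prop := exists c : R, c != 0 /\ q = c *: eY.

Definition inS (A : 'M[R]_3) (t : R) (p : 'cV[R]_3) : Prop := isInfY (gact A t p).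

(* the set L_0 (on homogeneous representatives q = (x:y:z), q <> 0);
   a_{ij} (1-based) is A (i-1) (j-1); a_{32} = A 2 1, a_{12} = A 0 1 *)
Definition inL0 (A : 'M[R]_3) (q : 'cV[R]_3) : Prop :=
  if A 2%:R 1%:R != 0 then
    q 2%:R 0 != 0 /\ A 2%:R 1%:R * (q 0 0 / q 2%:R 0) = A 0 1%:R
  else if A 0 1%:R != 0 then q 2%:R 0 = 0
  else True.

Definition inL (A : 'M[R]_3) (t : R) (p : 'cV[R]_3) : Prop := inL0 A (gact A t p).

Definition inK (A : 'M[R]_3) (t : R) (p : 'cV[R]_3) : Prop := inL A t p \/ inS A t p.

(* standard affine charts of RP^2: chart i is {p_i <> 0};
   lift2 i v is the representative with 1 in position i and the
   coordinates v.1, v.2 in the remaining positions (in increasing order) *)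
Definition lift2 (i : 'I_3) (v : R * R) : 'cV[R]_3 :=
  \col_k (if k == i then 1
          else if ((k == 0 :> nat) || ((k == 1 :> nat) && (i == 0 :> nat)))
               then v.1 else v.2).

Definition chart2 (i : 'I_3) (p : 'cV[R]_3) : R * R :=
  let a : 'I_3 := if i == 0 :> nat then 1 else 0 in
  let b : 'I_3 := if i == 2 :> nat then 1 else 2%:R in
  (p a 0 / p i 0, p b 0 / p i 0).

(* pi(x:y:z) = (x:z) in RP^1, read in the two standard charts of RP^1:
   chart true  = {z <> 0}, coordinate x/z ;
   chart false = {x <> 0}, coordinate z/x *)
Definition pi_dom (j : bool) (q : 'cV[R]_3) : Prop :=
  if j then q 2%:R 0 != 0 else q 0 0 != 0.
Definition pi_chart (j : bool) (q : 'cV[R]_3) : R :=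
  if j then q 0 0 / q 2%:R 0 else q 2%:R 0 / q 0 0.

Definition Pi_loc (A : 'M[R]_3) (i : 'I_3) (j : bool) (t : R) (v : R * R) : R :=
  pi_chart j (gact A t (lift2 i v)).

Definition norm2 (v : R * R) : R := Num.sqrt (v.1 ^+ 2 + v.2 ^+ 2).

Definition Phi (F : R -> R * R -> R) (t : R) (v w : R * R) : R :=
  (F t v - F t w) / norm2 (v.1 - w.1, v.2 - w.2).

(* transversality (k = m = 1) of F on the (local-coordinate) set W *)
Definition transversal_on (F : R -> R * R -> R) (W : set (R * (R * R))) : Prop :=
  exists C : R, 0 < C /\
    forall (t : R) (v w : R * R), W (t, v) -> W (t, w) -> v <> w ->
      `|Phi F t v w| <= C -> C <= `|derive1 (fun s => Phi F s v w) t|.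

End Defs.

From HB Require Import structures.
From mathcomp Require Import all_boot all_order all_algebra.
From mathcomp Require Import all_classical all_reals all_analysis.
From mathcomp Require Import ring lra.
Import Order.TTheory GRing.Theory Num.Theory.
Import numFieldNormedType.Exports.
Local Open Scope classical_set_scope.
Local Open Scope ring_scope.

(* In the affine chart i of RP^2 and the chart j of RP^1, Pi(t, v) = N(t, v) / D(t, v)
   with N and D affine in v and smooth in t.  The numerator of Phi(t, v, w) is a linear
   form g . (v - w), and that of its t-derivative another linear form k . (v - w); where
   g and k are linearly independent, |g . h| + |k . h| >= m |h|, so Phi and its
   t-derivative cannot be small together, uniformly near a point.  Since the rows of
   d/dt exp(tA) = A exp(tA) are combinations of the rows of exp(tA), det(g, k) is
   det exp(tA) times a_32 x - a_12 z evaluated at gamma_t(p), and off S this form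
   vanishes exactly on L_0. *)

Section RealAnalysis.
Context {R : realType}.

Lemma is_derive_continuous {f df : R -> R} :
  (forall t, is_derive t (1 : R) f (df t)) -> continuous f.
Proof. by move=> f_df t; apply/differentiable_continuous/derivable1_diffP; case: (f_df t). Qed.

Lemma exp_dominated_pseries_cvg (c : R^nat) (B M : R) : 0 <= B ->
  (forall k, `|c k| <= M * (B ^+ k / k`!%:R)) -> forall x, cvgn (pseries c x).
Proof.
move=> B0 c_le x; have M0 : 0 <= M.
  by have := c_le 0%N; rewrite expr0 fact0 divr1 mulr1; apply: le_trans.
apply: normed_cvg; apply: (@series_le_cvg _ _ (M *: exp_coeff (B * `|x|))) => n /=.
- exact: normr_ge0.
- by rewrite /exp_coeff /= mulr_ge0 ?divr_ge0 ?exprn_ge0 ?mulr_ge0.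
- rewrite /exp_coeff /= normrM normrX.
  rewrite [X in _ <= X](_ : _ = M * (B ^+ n / n`!%:R) * `|x| ^+ n); last first.
    by rewrite (_ : (M *: _) n = M * ((B * `|x|) ^+ n / n`!%:R)) // exprMn; ring.
  by rewrite ler_wpM2r ?exprn_ge0.
- exact/is_cvg_seriesZ/is_cvg_series_exp_coeff.
Qed.

Lemma cvg_series_lincomb (I : Type) (r : seq I) (c : I -> R) (u : I -> R^nat)
    (l : I -> R) :
  (forall i, series (u i) @ \oo --> l i) ->
  series (fun k => \sum_(i <- r) c i * u i k) @ \oo --> \sum_(i <- r) c i * l i.
Proof.
move=> ul; rewrite (_ : series _ = fun n => \sum_(i <- r) c i * series (u i) n).
  by apply: cvg_big => [|i _]; [exact: add_continuous | exact: cvgMl_tmp].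
by apply/funext => n; rewrite /series /= exchange_big; apply: eq_bigr => i _; rewrite mulr_sumr.
Qed.

End RealAnalysis.

Section MatrixExponential.
Context {R : realType}.

Definition mx_abs_sum {n} (A : 'M[R]_n) : R := \sum_i \sum_j `|A i j|.

Lemma mx_abs_sum_ge0 {n} (A : 'M[R]_n) : 0 <= mx_abs_sum A.
Proof. by rewrite sumr_ge0 // => i _; rewrite sumr_ge0. Qed.

Lemma row_abs_sum_le {n} (A : 'M[R]_n) i : \sum_j `|A i j| <= mx_abs_sum A.
Proof.
rewrite /mx_abs_sum [leRHS](bigD1 i) //= lerDl.
by rewrite sumr_ge0 // => k _; rewrite sumr_ge0.
Qed.

Lemma mxpow_entry_le {n} (A : 'M[R]_n) k i j : `|(A ^+ k) i j| <= mx_abs_sum A ^+ k.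
Proof.
elim: k i j => [|k IHk] i j.
  by rewrite expr0 mxE; case: (i == j); rewrite ?normr1 ?normr0 ?exprn_ge0 ?mx_abs_sum_ge0.
rewrite exprS -mulmxE mxE exprS; apply: le_trans (ler_norm_sum _ _ _) _.
apply: (@le_trans _ _ (\sum_j `|A i j| * mx_abs_sum A ^+ k)).
  by apply: ler_sum => l _; rewrite normrM ler_wpM2l.
by rewrite -mulr_suml ler_wpM2r ?exprn_ge0 ?mx_abs_sum_ge0 ?row_abs_sum_le.
Qed.

(* Coefficients of the power series of the m-th derivative of t |-> exp(tA)_ij. *)
Definition expmx_coef {n} (A : 'M[R]_n) m i j (k : nat) : R := (A ^+ (k + m)) i j / k`!%:R.

Lemma pseries_diffs_expmx_coef {n} (A : 'M[R]_n) m i j :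
  pseries_diffs (expmx_coef A m i j) = expmx_coef A m.+1 i j.
Proof.
apply/funext => k; rewrite /pseries_diffs /expmx_coef addSnnS factS natrM invfM.
by field; rewrite nat1r !pnatr_eq0 -!lt0n fact_gt0.
Qed.

Lemma expmx_coef_cvg {n} (A : 'M[R]_n) m i j x : cvgn (pseries (expmx_coef A m i j) x).
Proof.
apply: (@exp_dominated_pseries_cvg _ _ (mx_abs_sum A) (mx_abs_sum A ^+ m) (mx_abs_sum_ge0 A)).
move=> k; rewrite /expmx_coef normrM [`|_^-1|]ger0_norm ?invr_ge0 // mulrA -exprD addnC.
by rewrite ler_wpM2r ?mxpow_entry_le.
Qed.

Lemma expmxE (A : 'M[R]_3) t i j : expmx A t i j = limn (pseries (expmx_coef A 0 i j) t).
Proof.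
rewrite mxE /pseries /expmx_coef; congr (limn (series _)).
by apply/funext => k /=; rewrite addn0; ring.
Qed.

Lemma cvg_series_expmx (A : 'M[R]_3) t i j :
  series [sequence expmx_coef A 0 i j k * t ^+ k]_k @ \oo --> expmx A t i j.
Proof. by rewrite expmxE; exact: expmx_coef_cvg. Qed.

Lemma lim_pseries_expmx_coef1 (A : 'M[R]_3) t i j :
  limn (pseries (expmx_coef A 1 i j) t) = (A *m expmx A t) i j.
Proof.
rewrite mxE; apply: cvg_lim => //; rewrite /pseries.
suff -> : [sequence expmx_coef A 1 i j k * t ^+ k]_k =
    (fun k => \sum_l A i l * (expmx_coef A 0 l j k * t ^+ k)).
  exact: cvg_series_lincomb (fun l => cvg_series_expmx A t l j).
apply/funext => k /=; rewrite /expmx_coef addn1 exprS -mulmxE mxE !mulr_suml.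
by apply: eq_bigr => l _; rewrite addn0; ring.
Qed.

Lemma expmx_mulmxC (A : 'M[R]_3) t : A *m expmx A t = expmx A t *m A.
Proof.
apply/matrixP => i j; rewrite -lim_pseries_expmx_coef1 [RHS]mxE /pseries.
apply: cvg_lim => //.
suff -> : [sequence expmx_coef A 1 i j k * t ^+ k]_k =
    (fun k => \sum_l A l j * (expmx_coef A 0 i l k * t ^+ k)).
  by under eq_bigr do rewrite mulrC; exact: cvg_series_lincomb (cvg_series_expmx A t i).
apply/funext => k /=; rewrite /expmx_coef addn1 exprSr -mulmxE mxE !mulr_suml.
by apply: eq_bigr => l _; rewrite addn0; ring.
Qed.

Lemma is_derive_expmx (A : 'M[R]_3) t i j :
  is_derive t (1 : R) (fun s => expmx A s i j) ((A *m expmx A t) i j).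
Proof.
rewrite -lim_pseries_expmx_coef1 -pseries_diffs_expmx_coef.
rewrite (_ : (fun s => _) = fun s => limn (pseries (expmx_coef A 0 i j) s)); last first.
  by apply/funext => s; rewrite expmxE.
apply: (@pseries_snd_diffs _ _ (`|t| + 1)); rewrite ?pseries_diffs_expmx_coef;
  try exact: expmx_coef_cvg.
by rewrite [ltRHS]ger0_norm ?ltrDl // addr_ge0.
Qed.

Lemma expmx_continuous (A : 'M[R]_3) i j : continuous (fun s => expmx A s i j).
Proof. exact: is_derive_continuous (fun t => is_derive_expmx A t i j). Qed.

Lemma mulmx_expmx_continuous (A : 'M[R]_3) r c :
  continuous (fun s => (A *m expmx A s) r c).
Proof.
rewrite (_ : (fun s => _) = fun s => \sum_k A r k * expmx A s k c); last first.
  by apply/funext => s; rewrite mxE.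
apply: continuous_big => [|k _ s]; first exact: add_continuous.
exact: cvgMl_tmp (expmx_continuous A k c s).
Qed.

Lemma expmx0 (A : 'M[R]_3) : expmx A 0 = 1%:M.
Proof.
apply/matrixP => i j; rewrite mxE; apply: lim_near_cst => //.
near=> m; rewrite -[m]prednK; last by near: m; exists 1%N.
rewrite /series /= big_nat_recl // big1 ?addr0; first by rewrite expr0 fact0 divr1 mul1r expr0.
by move=> k _; rewrite expr0n /= !mul0r.
Unshelve. all: by end_near.
Qed.

Lemma is_derive_expmxN (A : 'M[R]_3) t i j :
  is_derive t (1 : R) (fun s => expmx A (- s) i j) (- (A *m expmx A (- t)) i j).
Proof.
have := is_derive1_comp (is_derive_expmx A (- t) i j) (is_deriveNid t 1).
by rewrite mulrN1.
Qed.

Lemma expmx_mulmxN (A : 'M[R]_3) t : expmx A t *m expmx A (- t) = 1%:M.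
Proof.
apply/matrixP => i j.
pose F l s := expmx A s i l * expmx A (- s) l j.
have dF s : is_derive s (1 : R) (\sum_l F l) 0.
  apply: is_derive_eq (is_derive_sum (fun l => is_deriveM
    (is_derive_expmx A s i l) (is_derive_expmxN A s l j))) _.
  rewrite /GRing.scale /= (expmx_mulmxC A s).
  transitivity (((expmx A s *m A) *m expmx A (- s)) i j
                - (expmx A s *m (A *m expmx A (- s))) i j); last by rewrite mulmxA subrr.
  rewrite [X in _ = X - _]mxE [X in _ = _ - X]mxE -sumrB.
  by apply: eq_bigr => l _; ring.
have := @is_derive_0_is_cst _ _ t 0 dF; rewrite !fct_sumE /F oppr0 expmx0 mxE => ->.
by rewrite -[in RHS](mulmx1 1%:M) mxE.
Qed.

End MatrixExponential.

Section PlanarEstimates.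
Context {R : realType}.

Lemma norm2_le_abs_sum (h1 h2 : R) : norm2 (h1, h2) <= `|h1| + `|h2|.
Proof.
rewrite /norm2 /= -[leRHS]ger0_norm ?addr_ge0 // -sqrtr_sqr ler_sqrt ?sqr_ge0 //.
rewrite sqrrD -[h1 ^+ 2]real_normK ?num_real // -[h2 ^+ 2]real_normK ?num_real //.
by rewrite -addrA lerD2l lerDr mulrn_wge0 ?mulr_ge0.
Qed.

Lemma norm2_gt0 (v w : R * R) : v <> w -> 0 < norm2 (v.1 - w.1, v.2 - w.2).
Proof.
case: v w => [x1 y1] [x2 y2] vw; rewrite /norm2 /= sqrtr_gt0 lt_def addr_ge0 ?sqr_ge0 //.
rewrite andbT paddr_eq0 ?sqr_ge0 // !sqrf_eq0 !subr_eq0.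
by apply/negP => /andP[/eqP e1 /eqP e2]; apply: vw; rewrite e1 e2.
Qed.

(* Cramer's rule: h is recovered from the two products g.h and k.h. *)
Lemma det2_abs_mul_le (g1 g2 k1 k2 h1 h2 : R) :
  `|g1 * k2 - g2 * k1| * (`|h1| + `|h2|) <=
  (`|g1| + `|g2| + `|k1| + `|k2|) * (`|g1 * h1 + g2 * h2| + `|k1 * h1 + k2 * h2|).
Proof.
set g := g1 * h1 + g2 * h2; set k := k1 * h1 + k2 * h2; set d := g1 * k2 - g2 * k1.
have d_h1 : `|d| * `|h1| <= `|k2| * `|g| + `|g2| * `|k|.
  rewrite -normrM (_ : d * h1 = k2 * g - g2 * k); last by rewrite /d /g /k; ring.
  by rewrite -!normrM ler_normB.
have d_h2 : `|d| * `|h2| <= `|g1| * `|k| + `|k1| * `|g|.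
  rewrite -normrM (_ : d * h2 = g1 * k - k1 * g); last by rewrite /d /g /k; ring.
  by rewrite -!normrM ler_normB.
rewrite mulrDr; apply: le_trans (lerD d_h1 d_h2) _.
have := mulr_ge0 (normr_ge0 g1) (normr_ge0 g); have := mulr_ge0 (normr_ge0 g2) (normr_ge0 g).
have := mulr_ge0 (normr_ge0 k1) (normr_ge0 k); have := mulr_ge0 (normr_ge0 k2) (normr_ge0 k).
rewrite !mulrDl !mulrDr; lra.
Qed.

Lemma det2_lower_bound (g1 g2 k1 k2 h1 h2 e S : R) :
  0 <= e -> 0 < S -> e <= `|g1 * k2 - g2 * k1| ->
  `|g1| + `|g2| + `|k1| + `|k2| <= S ->
  e / S * norm2 (h1, h2) <= `|g1 * h1 + g2 * h2| + `|k1 * h1 + k2 * h2|.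
Proof.
move=> e0 S0 e_le S_ge; rewrite mulrAC ler_pdivrMr // [leRHS]mulrC.
have e_n : e * norm2 (h1, h2) <= `|g1 * k2 - g2 * k1| * (`|h1| + `|h2|).
  by apply: ler_pM; rewrite ?norm2_le_abs_sum // /norm2 sqrtr_ge0.
apply: le_trans e_n (le_trans (det2_abs_mul_le g1 g2 k1 k2 h1 h2) _).
by rewrite ler_wpM2r ?addr_ge0.
Qed.

(* g and k together control n, so k is large when g is small. *)
Lemma quotient_slope_lower_bound (C m n g k P dP : R) :
  0 < n -> P != 0 -> 0 <= C -> C * (2 * `|P| + `|dP|) <= m ->
  m * n <= `|g| + `|k| -> `|g / (P * n)| <= C ->
  C <= `|(k * P - g * dP) / (P ^+ 2 * n)|.
Proof.
move=> n0 P0 C0 Cm mgk; have Pn : 0 < `|P| by rewrite normr_gt0.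
rewrite normrM normfV normrM [`|n|]gtr0_norm // ler_pdivrMr ?mulr_gt0 // => g_le.
rewrite normrM normfV normrM normrX [`|n|]gtr0_norm // ler_pdivlMr ?mulr_gt0 ?exprn_gt0 //.
apply: le_trans (lerB_dist _ _); rewrite !normrM.
have nP : 0 <= `|P| * n by rewrite mulr_ge0 ?ltW.
have k_ge : (m * n - `|g|) * `|P| <= `|k| * `|P| by apply: ler_wpM2r; rewrite ?lerBlDr 1?addrC.
have g_dP : `|g| * `|dP| <= C * (`|P| * n) * `|dP| by rewrite ler_wpM2r.
have g_P : `|g| * `|P| <= C * (`|P| * n) * `|P| by rewrite ler_wpM2r ?normr_ge0.
have m_ge : C * (2 * `|P| + `|dP|) * (`|P| * n) <= m * (`|P| * n) by rewrite ler_wpM2r.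
lra.
Qed.

End PlanarEstimates.

Section AffineRatio.
Context {R : realType}.
Implicit Types (a b da db : 'I_3 -> R) (v w h : R * R).

Definition aff a v : R := a 0 + a 1 * v.1 + a 2%:R * v.2.

Definition dot12 a h : R := a 1 * h.1 + a 2%:R * h.2.

(* The linear form h |-> aff a v * aff b (v - h) - aff a (v - h) * aff b v. *)
Definition wedge a b v (l : 'I_3) : R := aff b v * a l - aff a v * b l.

Definition dwedge a b da db v (l : 'I_3) : R := wedge da b v l + wedge a db v l.

Definition wedge_det a b da db v : R :=
  wedge a b v 1 * dwedge a b da db v 2%:R - wedge a b v 2%:R * dwedge a b da db v 1.

Definition wedge_abs_sum a b da db v : R :=
  `|wedge a b v 1| + `|wedge a b v 2%:R| +
  `|dwedge a b da db v 1| + `|dwedge a b da db v 2%:R|.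

Lemma aff_cross a b v w :
  aff a v * aff b w - aff a w * aff b v = dot12 (wedge a b v) (v.1 - w.1, v.2 - w.2).
Proof. by rewrite /aff /dot12 /wedge /aff /=; ring. Qed.

Lemma is_derive_aff {a da : R -> 'I_3 -> R} {t} v :
  (forall l, is_derive t (1 : R) (fun s => a s l) (da t l)) ->
  is_derive t (1 : R) (fun s => aff (a s) v) (aff (da t) v).
Proof.
move=> a_da; apply: is_derive_eq (is_deriveD (is_deriveD (a_da 0)
  (is_deriveM (a_da 1) (is_derive_cst v.1 t 1)))
  (is_deriveM (a_da 2%:R) (is_derive_cst v.2 t 1))) _.
by rewrite /aff /GRing.scale /=; ring.
Qed.

Section Quotient.
Context {a b da db : R -> 'I_3 -> R}.
Hypothesis a_da : forall t l, is_derive t (1 : R) (fun s => a s l) (da t l).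
Hypothesis b_db : forall t l, is_derive t (1 : R) (fun s => b s l) (db t l).

Let F t v := aff (a t) v / aff (b t) v.

Lemma is_derive_Phi_quotient t v w :
  aff (b t) v != 0 -> aff (b t) w != 0 -> v <> w ->
  let h := (v.1 - w.1, v.2 - w.2) in
  let P := aff (b t) v * aff (b t) w in
  let dP := aff (db t) v * aff (b t) w + aff (b t) v * aff (db t) w in
  let g := dot12 (wedge (a t) (b t) v) h in
  let k := dot12 (dwedge (a t) (b t) (da t) (db t) v) h in
  Phi F t v w = g / (P * norm2 h) /\
  is_derive t (1 : R) (fun s => Phi F s v w) ((k * P - g * dP) / (P ^+ 2 * norm2 h)).
Proof.
move=> Dv Dw vw h P dP g k; have n0 : norm2 h != 0 by rewrite gt_eqF ?norm2_gt0.
have gE : g = aff (a t) v * aff (b t) w - aff (a t) w * aff (b t) v by rewrite aff_cross.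
have kE : k = (aff (da t) v * aff (b t) w - aff (da t) w * aff (b t) v)
              + (aff (a t) v * aff (db t) w - aff (a t) w * aff (db t) v).
  by rewrite !aff_cross /k /dot12 /dwedge /=; ring.
split; first by rewrite /Phi /F gE /P; field; rewrite n0 Dv Dw.
have dN u := is_derive_aff u (a_da t); have dD u := is_derive_aff u (b_db t).
have dV u Du := @is_deriveV _ (fun s => aff (b s) u) t _ 1 Du (dD u).
have dPhi := is_deriveM (is_deriveB (is_deriveM (dN v) (dV v Dv)) (is_deriveM (dN w) (dV w Dw)))
  (is_derive_cst (norm2 h)^-1 t 1).
apply: is_derive_eq dPhi _; rewrite /GRing.scale /= kE gE /P /dP; field.
by rewrite n0 Dv Dw.
Qed.

End Quotient.
End AffineRatio.

Section ProductContinuity.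
Context {R : realType}.
Implicit Types (a b c : R -> 'I_3 -> R).

Lemma continuous_time_coef {c l} :
  continuous (fun t => c t l) -> continuous (fun x : R * (R * R) => c x.1 l).
Proof.
by move=> c_cont x; apply: (@cvg_comp _ _ _ fst (fun t => c t l) _ _ _
  (@cvg_fst _ _ _ _ _) (c_cont x.1)).
Qed.

Lemma continuous_aff {c} : (forall l, continuous (fun t => c t l)) ->
  continuous (fun x : R * (R * R) => aff (c x.1) x.2).
Proof.
move=> c_cont x; have c_x l := continuous_time_coef (c_cont l) x.
have v1 : (fun y : R * (R * R) => y.2.1) @ x --> x.2.1.
  by apply: (@cvg_comp _ _ _ snd fst _ _ _ (@cvg_snd _ _ _ _ _) (@cvg_fst _ _ _ _ _)).
have v2 : (fun y : R * (R * R) => y.2.2) @ x --> x.2.2.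
  by apply: (@cvg_comp _ _ _ snd snd _ _ _ (@cvg_snd _ _ _ _ _) (@cvg_snd _ _ _ _ _)).
exact (cvgD (cvgD (c_x 0) (cvgM (c_x 1) v1)) (cvgM (c_x 2%:R) v2)).
Qed.

Lemma continuous_wedge {a b} l :
  (forall l, continuous (fun t => a t l)) -> (forall l, continuous (fun t => b t l)) ->
  continuous (fun x : R * (R * R) => wedge (a x.1) (b x.1) x.2 l).
Proof.
move=> a_cont b_cont x.
exact: cvgB (cvgM (continuous_aff b_cont x) (continuous_time_coef (a_cont l) x))
            (cvgM (continuous_aff a_cont x) (continuous_time_coef (b_cont l) x)).
Qed.

Context {a b da db : R -> 'I_3 -> R}.
Hypotheses (a_cont : forall l, continuous (fun t => a t l))
  (b_cont : forall l, continuous (fun t => b t l))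
  (da_cont : forall l, continuous (fun t => da t l))
  (db_cont : forall l, continuous (fun t => db t l)).

Lemma continuous_dwedge l :
  continuous (fun x : R * (R * R) => dwedge (a x.1) (b x.1) (da x.1) (db x.1) x.2 l).
Proof.
move=> x; exact: cvgD (continuous_wedge l da_cont b_cont x) (continuous_wedge l a_cont db_cont x).
Qed.

Lemma continuous_wedge_det :
  continuous (fun x : R * (R * R) => wedge_det (a x.1) (b x.1) (da x.1) (db x.1) x.2).
Proof.
move=> x; have w l := continuous_wedge l a_cont b_cont x.
exact: cvgB (cvgM (w 1) (continuous_dwedge 2%:R x)) (cvgM (w 2%:R) (continuous_dwedge 1 x)).
Qed.

Lemma continuous_wedge_abs_sum :
  continuous (fun x : R * (R * R) => wedge_abs_sum (a x.1) (b x.1) (da x.1) (db x.1) x.2).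
Proof.
move=> x; have w l := cvg_norm (FF := nbhs_filter x) (continuous_wedge l a_cont b_cont x).
have dw l := cvg_norm (FF := nbhs_filter x) (continuous_dwedge l x).
exact (cvgD (cvgD (cvgD (w 1) (w 2%:R)) (dw 1)) (dw 2%:R)).
Qed.

End ProductContinuity.

Section QuotientTransversality.
Context {R : realType}.
Context {a b da db : R -> 'I_3 -> R}.
Hypothesis a_da : forall t l, is_derive t (1 : R) (fun s => a s l) (da t l).
Hypothesis b_db : forall t l, is_derive t (1 : R) (fun s => b s l) (db t l).

Let F t v := aff (a t) v / aff (b t) v.

Lemma transversal_on_quotient (W : set (R * (R * R))) (d1 d2 e S : R) :
  0 < d1 -> 0 < d2 -> 0 < e -> 0 < S ->
  (forall t v, W (t, v) ->
    [/\ aff (b t) v != 0, `|aff (b t) v| <= d1, `|aff (db t) v| <= d2,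
        e <= `|wedge_det (a t) (b t) (da t) (db t) v|
      & wedge_abs_sum (a t) (b t) (da t) (db t) v <= S]) ->
  transversal_on F W.
Proof.
move=> d1_gt0 d2_gt0 e_gt0 S_gt0 W_bounds.
set den := 2 * d1 ^+ 2 + 2 * d1 * d2.
have den_gt0 : 0 < den by rewrite addr_gt0 ?mulr_gt0 ?exprn_gt0.
have C_gt0 : 0 < e / S / den by rewrite !divr_gt0.
exists (e / S / den); split => // t v w.
move=> /W_bounds[Dv Dv_le dDv_le e_le S_ge] /W_bounds[Dw Dw_le dDw_le _ _] vw.
have [PhiE dPhi] := is_derive_Phi_quotient a_da b_db _ _ _ Dv Dw vw.
rewrite PhiE derive1E; case: dPhi => _ ->.
apply: (@quotient_slope_lower_bound _ _ (e / S)); first exact: norm2_gt0.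
- by rewrite mulf_neq0.
- exact: ltW.
- rewrite -[leRHS](@divfK _ den) ?gt_eqF // ler_wpM2l ?(ltW C_gt0) // /den !normrM expr2.
  apply: lerD; first by rewrite ler_wpM2l // ler_pM.
  apply: le_trans (ler_normD _ _) _; rewrite !normrM -mulrA mulr_natl mulr2n.
  by apply: lerD; [rewrite mulrC|]; apply: ler_pM.
- apply: det2_lower_bound => //; exact: ltW.
Qed.

Lemma near_transversal_quotient {t0 : R} {v0 : R * R} {Q : set (R * (R * R))} :
  (forall l, continuous (fun t => da t l)) -> (forall l, continuous (fun t => db t l)) ->
  aff (b t0) v0 != 0 -> wedge_det (a t0) (b t0) (da t0) (db t0) v0 != 0 ->
  (\forall x \near (t0, v0), Q x) ->
  exists W : set (R * (R * R)), [/\ open W, W (t0, v0),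
    forall t v, W (t, v) -> aff (b t) v != 0 /\ Q (t, v) & transversal_on F W].
Proof.
move=> da_cont db_cont D0 det0 Q_near.
have a_cont l := is_derive_continuous (fun t => a_da t l).
have b_cont l := is_derive_continuous (fun t => b_db t l).
set c := (t0, v0).
pose D x := aff (b x.1) x.2; pose dD x := aff (db x.1) x.2.
pose det x := wedge_det (a x.1) (b x.1) (da x.1) (db x.1) x.2.
pose S x := wedge_abs_sum (a x.1) (b x.1) (da x.1) (db x.1) x.2.
have D_cont := continuous_aff b_cont c; have dD_cont := continuous_aff db_cont c.
have det_cont := continuous_wedge_det a_cont b_cont da_cont db_cont c.
have S_cont := continuous_wedge_abs_sum a_cont b_cont da_cont db_cont c.
pose good x := [/\ D x != 0, `|D x| <= `|D c| + 1, `|dD x| <= `|dD c| + 1,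
  `|det c| / 2 <= `|det x| & S x <= S c + 1] /\ Q x.
have good_near : \forall x \near c, good x.
  near=> x; split; last by near: x.
  split.
  - by near: x; exact: cvgr_neq0 D_cont D0.
  - by near: x; apply: (cvgr_le _ (cvg_norm D_cont)); rewrite ltrDl.
  - by near: x; apply: (cvgr_le _ (cvg_norm dD_cont)); rewrite ltrDl.
  - near: x; apply: (cvgr_ge _ (cvg_norm det_cont)).
    by rewrite ltr_pdivrMr // ltr_pMr ?ltr1n // normr_gt0.
  - by near: x; apply: (cvgr_le _ S_cont); rewrite ltrDl.
exists (interior good); split => //; first exact: open_interior.
  by move=> t v /interior_subset[[]].
apply: (@transversal_on_quotient _ (`|D c| + 1) (`|dD c| + 1) (`|det c| / 2) (S c + 1)).
- by rewrite ltr_pwDr.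
- by rewrite ltr_pwDr.
- by rewrite divr_gt0 // normr_gt0.
- by rewrite ltr_pwDr // !addr_ge0.
- by move=> t v /interior_subset[].
Unshelve. all: by end_near.
Qed.

End QuotientTransversality.

Section ProjectiveCoordinates.
Context {R : realType}.

Lemma ord3P (i : 'I_3) : [\/ i = 0, i = 1 | i = 2%:R].
Proof.
by case: i => [[|[|[|//]]] ?]; [apply: Or31 | apply: Or32 | apply: Or33]; apply: val_inj.
Qed.

Lemma sum_ord3 (F : 'I_3 -> R) : \sum_k F k = F 0 + F 1 + F 2%:R.
Proof. by rewrite !big_ord_recl big_ord0 addr0 addrA; congr (F _ + F _ + F _); apply: val_inj. Qed.

(* The homogeneous coordinate carrying the l-th coordinate of chart i of [lift2]
   (l = 0 is the coordinate normalised to 1). *)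
Definition chart_coord (i l : 'I_3) : 'I_3 :=
  if l == 0 then i
  else if l == 1 then (if i == 0 :> nat then 1 else 0)
  else (if i == 2 :> nat then 1 else 2%:R).

Lemma sum_chart_coord i (F : 'I_3 -> R) : \sum_l F (chart_coord i l) = \sum_k F k.
Proof. by rewrite !sum_ord3 /chart_coord; case: (ord3P i) => -> /=; ring. Qed.

Lemma gact_lift2 (A : 'M[R]_3) t i v r :
  gact A t (lift2 i v) r 0 = aff (fun l => expmx A t r (chart_coord i l)) v.
Proof.
rewrite /gact mxE sum_ord3 /aff /lift2 /chart_coord !mxE.
by case: (ord3P i) => -> /=; ring.
Qed.

Lemma lift2_chart2 i (p : 'cV[R]_3) : p i 0 != 0 -> lift2 i (chart2 i p) = (p i 0)^-1 *: p.
Proof.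
move=> pi0; apply/matrixP => k l; rewrite (ord1 l) /lift2 /chart2 !mxE.
by case: (ord3P i) pi0 => -> pi0; case: (ord3P k) => -> /=; rewrite ?mulVf // mulrC.
Qed.

Lemma colvec_coord_neq0 {p : 'cV[R]_3} : p != 0 -> exists i, p i 0 != 0.
Proof.
move=> p_neq0; apply/not_existsP => p_eq0; move/eqP: p_neq0; apply.
apply/matrixP => k l; rewrite (ord1 l) mxE.
by have [//|pk] := eqVneq (p k 0) 0; case: (p_eq0 k).
Qed.

Lemma gactZ (A : 'M[R]_3) t c (p : 'cV[R]_3) : gact A t (c *: p) = c *: gact A t p.
Proof. by rewrite /gact scalemxAr. Qed.

Lemma gact_eq0 (A : 'M[R]_3) t (p : 'cV[R]_3) : (gact A t p == 0) = (p == 0).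
Proof.
apply/eqP/eqP => [|->]; last by rewrite /gact mulmx0.
have := expmx_mulmxN A (- t); rewrite opprK => EK.
by rewrite /gact => Ep0; rewrite -[p]mul1mx -EK -mulmxA Ep0 mulmx0.
Qed.

Lemma isInfY_xz {q : 'cV[R]_3} : isInfY q -> q 0 0 = 0 /\ q 2%:R 0 = 0.
Proof. by move=> [c [_ ->]]; rewrite /eY !mxE /= !mulr0. Qed.

Lemma xz_isInfY (q : 'cV[R]_3) : q != 0 -> q 0 0 = 0 -> q 2%:R 0 = 0 -> isInfY q.
Proof.
move=> q_neq0 q0 q2; exists (q 1 0); split.
  apply: contra q_neq0 => /eqP q1; apply/eqP/matrixP => k l; rewrite (ord1 l) mxE.
  by case: (ord3P k) => ->.
apply/matrixP => k l; rewrite (ord1 l) /eY !mxE.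
by case: (ord3P k) => -> /=; rewrite ?mulr1 ?mulr0.
Qed.

Lemma gact_xz_neq0 {A : 'M[R]_3} {t} {p : 'cV[R]_3} : p != 0 -> ~ inS A t p ->
  gact A t p 0 0 != 0 \/ gact A t p 2%:R 0 != 0.
Proof.
move=> p_neq0 notS; have [x0|] := eqVneq (gact A t p 0 0) 0; last by left.
have [z0|] := eqVneq (gact A t p 2%:R 0) 0; last by right.
by case: notS; apply: xz_isInfY; rewrite ?gact_eq0.
Qed.

(* a_32 x - a_12 z in the paper's 1-based indexing; off (0:1:0), L_0 is its zero set. *)
Definition l0_form (A : 'M[R]_3) (q : 'cV[R]_3) : R := A 2%:R 1 * q 0 0 - A 0 1 * q 2%:R 0.

Lemma inL0P (A : 'M[R]_3) {q : 'cV[R]_3} : q 0 0 != 0 \/ q 2%:R 0 != 0 ->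
  inL0 A q <-> l0_form A q = 0.
Proof.
rewrite /inL0 /l0_form => xz; case: ifPn => [a32|/negPn/eqP->].
  have [z0|z_neq0] := eqVneq (q 2%:R 0) 0.
    have x_neq0 : q 0 0 != 0 by case: xz; rewrite // z0 eqxx.
    rewrite z0 mulr0 subr0; split => [[]//|/eqP].
    by rewrite mulf_eq0 (negPf a32) (negPf x_neq0).
  split => [[_ <-]|/eqP]; first by rewrite mulrA divfK ?subrr.
  by rewrite subr_eq0 => /eqP e; split; rewrite // mulrA e mulfK.
rewrite mul0r sub0r; case: ifPn => [a12|/negPn/eqP->]; last by rewrite mul0r oppr0.
split => [->|/eqP]; first by rewrite mulr0 oppr0.
by rewrite oppr_eq0 mulf_eq0 (negPf a12) => /eqP.
Qed.

End ProjectiveCoordinates.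

Section Generator.
Context {R : realType}.
Implicit Types (m n : 'I_3 -> 'I_3 -> R).

Definition det3 m : R :=
  m 0 0 * (m 1 1 * m 2%:R 2%:R - m 1 2%:R * m 2%:R 1)
  - m 0 1 * (m 1 0 * m 2%:R 2%:R - m 1 2%:R * m 2%:R 0)
  + m 0 2%:R * (m 1 0 * m 2%:R 1 - m 1 1 * m 2%:R 0).

Lemma det3_mul m n : det3 m * det3 n = det3 (fun r s => \sum_l m r l * n l s).
Proof. by rewrite /det3 !sum_ord3; ring. Qed.

Lemma det3_expmx_chart_neq0 (A : 'M[R]_3) t i :
  det3 (fun r l => expmx A t r (chart_coord i l)) != 0.
Proof.
have := det3_mul (fun r l => expmx A t r (chart_coord i l))
                 (fun l s => expmx A (- t) (chart_coord i l) s).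
rewrite (_ : (fun r s => \sum_l _) = fun r s => (1%:M : 'M[R]_3) r s); last first.
  apply/funext => r; apply/funext => s; rewrite -(expmx_mulmxN A t) mxE.
  exact: (sum_chart_coord i (fun k => expmx A t r k * expmx A (- t) k s)).
have -> : det3 (fun r s => (1%:M : 'M[R]_3) r s) = 1 by rewrite /det3 !mxE /=; ring.
by move=> det1; apply/eqP => det0; move: det1; rewrite det0 mul0r => /esym/eqP; rewrite oner_eq0.
Qed.

Lemma wedge_det_swap (a b da db : 'I_3 -> R) v :
  wedge_det b a db da v = wedge_det a b da db v.
Proof. by rewrite /wedge_det /dwedge /wedge; ring. Qed.

Lemma wedge_det_generator (A : 'M[R]_3) m v :
  wedge_det (m 0) (m 2%:R) (fun l => \sum_k A 0 k * m k l) (fun l => \sum_k A 2%:R k * m k l) v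
  = det3 m * (A 0 1 * aff (m 2%:R) v - A 2%:R 1 * aff (m 0) v).
Proof. by rewrite /wedge_det /dwedge /wedge /aff /det3 !sum_ord3; ring. Qed.

End Generator.

Section LocalTransversality.
Context {R : realType}.
Context {A : 'M[R]_3}.

Definition pi_num (j : bool) : 'I_3 := if j then 0 else 2%:R.
Definition pi_den (j : bool) : 'I_3 := if j then 2%:R else 0.

Lemma pi_domE j (q : 'cV[R]_3) : pi_dom j q <-> q (pi_den j) 0 != 0.
Proof. by case: j. Qed.

Lemma pi_den_xz {j} {q : 'cV[R]_3} : q (pi_den j) 0 != 0 -> q 0 0 != 0 \/ q 2%:R 0 != 0.
Proof. by case: j; [right | left]. Qed.

Lemma pi_dom_xz {q : 'cV[R]_3} :
  q 0 0 != 0 \/ q 2%:R 0 != 0 -> pi_dom (q 2%:R 0 != 0) q.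
Proof. by have [z0 [] |] := eqVneq (q 2%:R 0) 0; rewrite // z0 eqxx. Qed.

Lemma l0_formZ c (q : 'cV[R]_3) : l0_form A (c *: q) = c * l0_form A q.
Proof. by rewrite /l0_form !mxE; ring. Qed.

Section Chart.
Context {i : 'I_3} {j : bool}.

Let row (r : 'I_3) t l := expmx A t r (chart_coord i l).
Let drow (r : 'I_3) t l := (A *m expmx A t) r (chart_coord i l).

Lemma gact_lift2_row t v r : gact A t (lift2 i v) r 0 = aff (row r t) v.
Proof. exact: gact_lift2. Qed.

Lemma Pi_loc_quotient :
  Pi_loc A i j = fun t v => aff (row (pi_num j) t) v / aff (row (pi_den j) t) v.
Proof.
apply/funext => t; apply/funext => v; rewrite /Pi_loc /pi_chart.
by case: j; rewrite !gact_lift2_row.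
Qed.

Lemma wedge_det_chart t v :
  wedge_det (row (pi_num j) t) (row (pi_den j) t) (drow (pi_num j) t) (drow (pi_den j) t) v
  = - det3 (fun r => row r t) * l0_form A (gact A t (lift2 i v)).
Proof.
have -> : wedge_det (row (pi_num j) t) (row (pi_den j) t)
                    (drow (pi_num j) t) (drow (pi_den j) t) v
          = wedge_det (row 0 t) (row 2%:R t) (drow 0 t) (drow 2%:R t) v.
  by case: j; rewrite // wedge_det_swap.
have drowE r : drow r t = fun l => \sum_k A r k * row k t l.
  by apply/funext => l; rewrite /drow mxE.
by rewrite !drowE wedge_det_generator /l0_form !gact_lift2_row; ring.
Qed.

Lemma continuous_l0_form_lift :
  continuous (fun x : R * (R * R) => l0_form A (gact A x.1 (lift2 i x.2))).
Proof.
have row_cont r l : continuous (fun t => row r t l) by exact: expmx_continuous.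
rewrite (_ : (fun x => _) = fun x => A 2%:R 1 * aff (row 0 x.1) x.2
                                     - A 0 1 * aff (row 2%:R x.1) x.2); last first.
  by apply/funext => x; rewrite /l0_form !gact_lift2_row.
move=> x; exact (cvgB (cvgMl_tmp (continuous_aff (row_cont 0) x))
                      (cvgMl_tmp (continuous_aff (row_cont 2%:R) x))).
Qed.

Lemma local_transversality {t0} {p0 : 'cV[R]_3} :
  p0 i 0 != 0 -> pi_dom j (gact A t0 p0) -> l0_form A (gact A t0 p0) != 0 ->
  exists W : set (R * (R * R)),
    [/\ open W, W (t0, chart2 i p0),
        forall t v, W (t, v) -> pi_dom j (gact A t (lift2 i v)) /\ ~ inK A t (lift2 i v)
      & transversal_on (Pi_loc A i j) W].
Proof.
move=> p0i dom0 form0; set v0 := chart2 i p0.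
have lift0 : gact A t0 (lift2 i v0) = (p0 i 0)^-1 *: gact A t0 p0.
  by rewrite lift2_chart2 // gactZ.
have form_lift0 : l0_form A (gact A t0 (lift2 i v0)) != 0.
  by rewrite lift0 l0_formZ mulf_neq0 ?invr_eq0.
have D0 : aff (row (pi_den j) t0) v0 != 0.
  by rewrite -gact_lift2_row lift0 mxE mulf_neq0 ?invr_eq0 // -pi_domE.
have det0 : wedge_det (row (pi_num j) t0) (row (pi_den j) t0)
                      (drow (pi_num j) t0) (drow (pi_den j) t0) v0 != 0.
  by rewrite wedge_det_chart mulf_neq0 ?oppr_eq0 ?det3_expmx_chart_neq0.
have form_near : \forall x \near (t0, v0), l0_form A (gact A x.1 (lift2 i x.2)) != 0.
  exact: cvgr_neq0 (continuous_l0_form_lift (t0, v0)) form_lift0.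
have row_drow r t l : is_derive t (1 : R) (fun s => row r s l) (drow r t l).
  exact: is_derive_expmx.
have drow_cont r l : continuous (fun t => drow r t l) by exact: mulmx_expmx_continuous.
have [W [W_open W0 W_good W_tr]] := near_transversal_quotient (row_drow _) (row_drow _)
  (drow_cont _) (drow_cont _) D0 det0 form_near.
exists W; split => //; last by rewrite Pi_loc_quotient.
move=> t v /W_good[D_neq0 form_neq0].
have den_neq0 : gact A t (lift2 i v) (pi_den j) 0 != 0 by rewrite gact_lift2_row.
rewrite pi_domE; split => // -[L|S].
  by move/(inL0P A (pi_den_xz den_neq0))/eqP: L; rewrite (negPf form_neq0).
have [x0 z0] := isInfY_xz S.
by move: den_neq0; case: j => /=; rewrite ?x0 ?z0 eqxx.
Qed.

End Chart.
End LocalTransversality.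

Theorem theorem4p1 (R : realType) (A : 'M[R]_3) (hA : A != 0) :
  (* Pi is defined on (Gamma x RP^2) \ S *)
  (forall (t : R) (p : 'cV[R]_3), p != 0 -> ~ inS A t p ->
     gact A t p 0 0 != 0 \/ gact A t p 2%:R 0 != 0) /\
  (* Pi is locally transversal on (Gamma x RP^2) \ K *)
  (forall (t0 : R) (p0 : 'cV[R]_3), p0 != 0 -> ~ inK A t0 p0 ->
     exists (i : 'I_3) (j : bool) (W : set (R * (R * R))),
       [/\ p0 i 0 != 0, open W, W (t0, chart2 i p0),
           (forall (t : R) (v : R * R), W (t, v) ->
              pi_dom j (gact A t (lift2 i v)) /\ ~ inK A t (lift2 i v))
         & transversal_on (Pi_loc A i j) W]).
Proof.
split=> [t p|t0 p0 p0_neq0 notK]; first exact: gact_xz_neq0.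
have [i p0i] := colvec_coord_neq0 p0_neq0.
have xz : gact A t0 p0 0 0 != 0 \/ gact A t0 p0 2%:R 0 != 0.
  by apply: gact_xz_neq0 => // S; apply: notK; right.
have form0 : l0_form A (gact A t0 p0) != 0.
  by apply/eqP => /(inL0P A xz) L; apply: notK; left.
have [W [W_open W0 W_good W_tr]] := local_transversality p0i (pi_dom_xz xz) form0.
by exists i, (gact A t0 p0 2%:R 0 != 0), W.
Qed.
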